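(* Assume the Continuum Hypothesis. Let $M=\langle A, \Sigma \cup \{R\}\rangle$ be a countable structure with signature $\Sigma \cup \{R\}$, where $R$ is an $n$-ary relation symbol. Let $\mathcal{F}$ be the set of all (everywhere defined) functions $f\colon \mathbb{N}\to A$. The following conditions are equivalent: (1) the relation $R$ is definable in $\langle A, \Sigma\rangle$; (2) every permutation $\varphi$ of $\mathcal{F}$ which almost preserves all relations from $\Sigma$ also almost preserves the relation $R$.
   Context: The signature $\Sigma$ is assumed to contain the equality symbol $=$. A relation $R$ is definable in $\langle A,\Sigma\rangle$ if there is a first-order formula $S(x_1,\dots,x_n)$ in the signature $\Sigma$ such that $M\vDash \forall x_1\dots\forall x_n\,(R(x_1,\dots,x_n)\leftrightarrow S(x_1,\dots,x_n))$. For an $n$-ary relation $P$ on $A$ and a (possibly partial) mapping $\varphi\colon\mathcal{F}\to\mathcal{F}$, we say $\varphi$ almost preserves $P$ if for all $f_1,\dots,f_n\in \mathrm{Dom}(\varphi)$ the set $\{i\in\mathbb{N} : P(f_1(i),\dots,f_n(i)) \not\leftrightarrow P(\varphi(f_1)(i),\dots,\varphi(f_n)(i))\}$ is finite. A permutation of $\mathcal{F}$ is a bijection $\mathcal{F}\to\mathcal{F}$. *)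

From mathcomp Require Import all_boot.
Set Implicit Arguments. Unset Strict Implicit. Unset Printing Implicit Defensive.

(* The Continuum Hypothesis: every set of reals (coded as nat -> bool) is
   either countable or contains an injective copy of the continuum. *)
Definition CH : Prop :=
  forall S : (nat -> bool) -> Prop,
    (exists g : nat -> (nat -> bool), forall x, S x -> exists k, g k = x) \/
    (exists h : (nat -> bool) -> (nat -> bool),
        (forall x, S (h x)) /\ injective h).

Definition countable_type (T : Type) : Prop :=
  exists f : T -> nat, injective f.

Inductive formula (Sym : Type) (ar : Sym -> nat) : Type :=
  | FEq : nat -> nat -> formula ar
  | FRel : forall s : Sym, ('I_(ar s) -> nat) -> formula ar
  | FNot : formula ar -> formula ar
  | FAnd : formula ar -> formula ar -> formula ar
  | FOr : formula ar -> formula ar -> formula ar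
  | FImp : formula ar -> formula ar -> formula ar
  | FExists : nat -> formula ar -> formula ar
  | FForall : nat -> formula ar -> formula ar.

Definition upd (A : Type) (e : nat -> A) (x : nat) (a : A) : nat -> A :=
  fun y => if y == x then a else e y.

Fixpoint sat (Sym : Type) (ar : Sym -> nat) (A : Type)
    (I : forall s : Sym, ('I_(ar s) -> A) -> Prop)
    (e : nat -> A) (phi : formula ar) {struct phi} : Prop :=
  match phi with
  | FEq x y => e x = e y
  | FRel s args => I s (fun k => e (args k))
  | FNot p => ~ sat I e p
  | FAnd p q => sat I e p /\ sat I e q
  | FOr p q => sat I e p \/ sat I e q
  | FImp p q => sat I e p -> sat I e q
  | FExists x p => exists a : A, sat I (upd e x a) p
  | FForall x p => forall a : A, sat I (upd e x a) p
  end.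

(* R (n-ary) is definable in <A, I>: there is a formula S(x_0,...,x_{n-1})
   (variables 0..n-1 play the role of x_1..x_n) equivalent to R. *)
Definition definable (Sym : Type) (ar : Sym -> nat) (A : Type)
    (I : forall s : Sym, ('I_(ar s) -> A) -> Prop)
    (n : nat) (R : ('I_n -> A) -> Prop) : Prop :=
  exists S : formula ar,
    forall e : nat -> A, R (fun k => e (nat_of_ord k)) <-> sat I e S.

Definition almost_preserves (A : Type) (phi : (nat -> A) -> (nat -> A))
    (n : nat) (P : ('I_n -> A) -> Prop) : Prop :=
  forall f : 'I_n -> (nat -> A),
    exists N : nat, forall i : nat, N <= i ->
      (P (fun k => f k i) <-> P (fun k => phi (f k) i)).

Definition eq_rel (A : Type) : ('I_2 -> A) -> Prop :=
  fun t => t ord0 = t ord_max.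

From mathcomp Require Import all_boot.
From mathcomp Require Import boolp wochoice.
From Stdlib Require Import Inverse_Image.

(* (1) => (2): a permutation of F that almost preserves equality and Sigma
   almost preserves every formula, by induction on formulas (bijectivity handles
   the quantifiers), hence every definable relation.
   (2) => (1): if R is not definable, compactness gives tuples a_i, b_i with
   R(a_i), ~R(b_i), agreeing on more and more formulas, so the columns of (a_i)
   and of (b_i) satisfy the same formulas at almost every coordinate.  Call a
   relation between functions elementary if all families of related pairs do
   so.  A countable elementary relation extends by any one element in either
   direction: realize, coordinatewise, longer and longer finite parts of its
   type.  Under CH, F has a well-order with countable initial segments, so a
   transfinite back-and-forth extends the column relation to an elementary
   relation that is total and onto, hence a bijection up to almost equality.
   Correcting it on each almost-equality class gives a permutation that almost
   preserves equality and Sigma but maps the columns of (a_i) to those of (b_i),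
   so it does not almost preserve R. *)

Set Implicit Arguments.
Unset Strict Implicit.
Unset Printing Implicit Defensive.

Definition epsilon (T : Type) (d : T) (P : T -> Prop) : T :=
  if pselect (exists x, P x) is left H then proj1_sig (cid H) else d.

Lemma epsilonP (T : Type) (d : T) (P : T -> Prop) :
  (exists x, P x) -> P (epsilon d P).
Proof. by rewrite /epsilon; case: pselect => // H _; case: (cid H). Qed.

Lemma epsilon_default (T : Type) (d d' : T) (P : T -> Prop) :
  (exists x, P x) -> epsilon d P = epsilon d' P.
Proof. by rewrite /epsilon; case: pselect. Qed.

Definition eventually (P : nat -> Prop) : Prop :=
  exists N, forall i, N <= i -> P i.

Lemma eventually_mono (P Q : nat -> Prop) :
  (forall i, P i -> Q i) -> eventually P -> eventually Q.
Proof. by move=> PQ [N HN]; exists N => i /HN /PQ. Qed.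

Lemma eventually_and (P Q : nat -> Prop) :
  eventually P -> eventually Q -> eventually (fun i => P i /\ Q i).
Proof.
move=> [M HM] [N HN]; exists (maxn M N) => i.
by rewrite geq_max => /andP[/HM ? /HN ?].
Qed.

Lemma eventually_ge m : eventually (fun i => m <= i).
Proof. by exists m. Qed.

Lemma eventually_forall_ord r (P : 'I_r -> nat -> Prop) :
  (forall k, eventually (P k)) -> eventually (fun i => forall k, P k i).
Proof.
move=> /choice[N HN]; exists (\max_k N k) => i hi k.
by apply: HN; apply: leq_trans hi; apply: leq_bigmax.
Qed.

Definition set_bit (s : nat -> bool) k (c : bool) : nat -> bool :=
  fun j => if j == k then c else s j.

Lemma eventually_forall_bits (G : (nat -> bool) -> nat -> Prop) k :
  (forall s s', (forall j, j < k -> s j = s' j) -> G s = G s') ->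
  (forall s, eventually (G s)) -> eventually (fun i => forall s, G s i).
Proof.
elim: k G => [|k IH] G Gext Gev.
  apply: eventually_mono (Gev (fun _ => false)) => i Gi s.
  by rewrite (Gext s (fun _ => false)).
have Gset c : eventually (fun i => forall s, G (set_bit s k c) i).
  apply: IH => [s s' ss'|s]; last exact: Gev.
  apply: Gext => j hj; rewrite /set_bit; case: eqP => // /eqP njk.
  by apply: ss'; rewrite ltn_neqAle njk -ltnS.
apply: eventually_mono (eventually_and (Gset true) (Gset false)) => i [Gt Gf] s.
have -> : s = set_bit s k (s k).
  by apply: funext => j; rewrite /set_bit; case: eqP => // ->.
by case: (s k).
Qed.

Lemma bounded_max_or_none (P : nat -> Prop) i :
  (forall m, m <= i -> ~ P m) \/
  exists2 mx, mx <= i /\ P mx & forall m, m <= i -> P m -> m <= mx.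
Proof.
case: (lem (exists m, m <= i /\ P m)) => [[m [hm Pm]]|none]; last first.
  by left=> m hm Pm; apply: none; exists m.
have ex : exists m, (m <= i) && `[< P m >] by exists m; rewrite hm; apply/asboolP.
have ub k : (k <= i) && `[< P k >] -> k <= i by case/andP.
right; case: (ex_maxnP ex ub) => mx /andP[hmx /asboolP Pmx] maxmx.
exists mx => // k hk Pk; apply: maxmx; rewrite hk; exact/asboolP.
Qed.

Definition almost_eq (A : Type) (f g : nat -> A) := eventually (fun i => f i = g i).

Lemma almost_eq_refl (A : Type) (f : nat -> A) : almost_eq f f.
Proof. by exists 0. Qed.

Lemma almost_eq_sym (A : Type) (f g : nat -> A) : almost_eq f g -> almost_eq g f.
Proof. exact: eventually_mono. Qed.

Lemma almost_eq_trans (A : Type) (f g h : nat -> A) :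
  almost_eq f g -> almost_eq g h -> almost_eq f h.
Proof. by move=> fg gh; apply: eventually_mono (eventually_and fg gh) => i [-> ->]. Qed.

Definition pointwise (A : Type) (E : nat -> nat -> A) (i : nat) : nat -> A :=
  fun v => E v i.

Lemma pointwise_upd (A : Type) (E : nat -> nat -> A) x h i :
  pointwise (upd E x h) i = upd (pointwise E i) x (h i).
Proof. by apply: funext => v; rewrite /pointwise /upd; case: eqP. Qed.

Lemma comp_upd (X Y : Type) (f : X -> Y) (E : nat -> X) x h :
  f \o upd E x h = upd (f \o E) x (f h).
Proof. by apply: funext => v; rewrite /= /upd; case: eqP. Qed.

Section Syntax.
Variables (Sym : Type) (ar : Sym -> nat) (A : Type).
Variable I : forall s : Sym, ('I_(ar s) -> A) -> Prop.

Fixpoint var_bound (p : formula ar) : nat :=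
  match p with
  | FEq x y => (maxn x y).+1
  | FRel s args => \max_(k < ar s) (args k).+1
  | FNot p => var_bound p
  | FAnd p q | FOr p q | FImp p q => maxn (var_bound p) (var_bound q)
  | FExists x p | FForall x p => maxn x.+1 (var_bound p)
  end.

Lemma upd_agree (e e' : nat -> A) x a b :
  (forall v, v < maxn x.+1 b -> e v = e' v) ->
  forall v, v < b -> upd e x a v = upd e' x a v.
Proof.
move=> ee' v hv; rewrite /upd; case: eqP => // _.
by apply: ee'; rewrite leq_max hv orbT.
Qed.

Lemma sat_agree (p : formula ar) (e e' : nat -> A) :
  (forall v, v < var_bound p -> e v = e' v) -> sat I e p <-> sat I e' p.
Proof.
elim: p e e' => /=
  [x y|s args|p IH|p IHp q IHq|p IHp q IHq|p IHp q IHq|x p IH|x p IH] e e' ee'.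
- by rewrite !ee' // ltnS ?leq_maxl ?leq_maxr.
- suff -> : (fun k => e (args k)) = (fun k => e' (args k)) by [].
  by apply: funext => k; apply: ee'; apply: leq_trans (leq_bigmax k).
- by rewrite (IH e e').
- by rewrite (IHp e e') ?(IHq e e') // => v hv; apply: ee'; rewrite leq_max hv ?orbT.
- by rewrite (IHp e e') ?(IHq e e') // => v hv; apply: ee'; rewrite leq_max hv ?orbT.
- by rewrite (IHp e e') ?(IHq e e') // => v hv; apply: ee'; rewrite leq_max hv ?orbT.
- have IHa a : sat I (upd e x a) p <-> sat I (upd e' x a) p by apply/IH/upd_agree.
  by split=> -[a /IHa Ha]; exists a.
- have IHa a : sat I (upd e x a) p <-> sat I (upd e' x a) p by apply/IH/upd_agree.
  by split=> Ha a; apply/IHa.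
Qed.

Lemma upd_comp_fresh (e : nat -> A) (rho : nat -> nat) x y a b :
  (forall v, v < b -> rho v < y) ->
  forall v, v < b ->
    upd e y a (if v == x then y else rho v) = upd (e \o rho) x a v.
Proof.
move=> fresh v hv; rewrite /upd; case: (eqVneq v x) => [_|_]; first by rewrite eqxx.
by case: eqP => // rhoy; have := fresh v hv; rewrite rhoy ltnn.
Qed.

Lemma sat_rename_binder (p : formula ar) x (rho : nat -> nat) :
  (forall rho', exists p', forall e, sat I e p' <-> sat I (e \o rho') p) ->
  exists y p', forall e a, sat I (upd e y a) p' <-> sat I (upd (e \o rho) x a) p.
Proof.
move=> IH; pose y := (\max_(v < var_bound p) rho v).+1.
have fresh v : v < var_bound p -> rho v < y.
  by move=> hv; rewrite ltnS (leq_bigmax (Ordinal hv)).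
have [p' Hp] := IH (fun v => if v == x then y else rho v).
exists y, p' => e a; rewrite Hp; apply: sat_agree; exact: upd_comp_fresh fresh.
Qed.

Lemma sat_rename (p : formula ar) (rho : nat -> nat) :
  exists p' : formula ar, forall e, sat I e p' <-> sat I (e \o rho) p.
Proof.
elim: p rho => [x y|s args|p IH|p IHp q IHq|p IHp q IHq|p IHp q IHq|x p IH|x p IH] rho.
- by exists (FEq ar (rho x) (rho y)).
- by exists (FRel (rho \o args)).
- by have [p' Hp] := IH rho; exists (FNot p') => e /=; rewrite Hp.
- have [p' Hp] := IHp rho; have [q' Hq] := IHq rho.
  by exists (FAnd p' q') => e /=; rewrite Hp Hq.
- have [p' Hp] := IHp rho; have [q' Hq] := IHq rho.
  by exists (FOr p' q') => e /=; rewrite Hp Hq.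
- have [p' Hp] := IHp rho; have [q' Hq] := IHq rho.
  by exists (FImp p' q') => e /=; rewrite Hp Hq.
- have [y [p' Hp]] := sat_rename_binder x rho IH.
  by exists (FExists y p') => e /=; split=> -[a /Hp Ha]; exists a.
- have [y [p' Hp]] := sat_rename_binder x rho IH.
  by exists (FForall y p') => e /=; split=> Ha a; apply/Hp.
Qed.

End Syntax.

Section FormulaEnumeration.
Variables (Sym : Type) (ar : Sym -> nat) (c : Sym -> nat).
Hypothesis c_inj : injective c.

Fixpoint formula_code (p : formula ar) : GenTree.tree nat :=
  match p with
  | FEq x y => GenTree.Node 0 [:: GenTree.Leaf x; GenTree.Leaf y]
  | FRel s args => GenTree.Node 1 [:: GenTree.Leaf (c s);
        GenTree.Node 0 [seq GenTree.Leaf (args k) | k <- enum 'I_(ar s)]]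
  | FNot p => GenTree.Node 2 [:: formula_code p]
  | FAnd p q => GenTree.Node 3 [:: formula_code p; formula_code q]
  | FOr p q => GenTree.Node 4 [:: formula_code p; formula_code q]
  | FImp p q => GenTree.Node 5 [:: formula_code p; formula_code q]
  | FExists x p => GenTree.Node 6 [:: GenTree.Leaf x; formula_code p]
  | FForall x p => GenTree.Node 7 [:: GenTree.Leaf x; formula_code p]
  end.

Lemma formula_code_inj : injective formula_code.
Proof.
elim=> [x y|s args|p IH|p IHp q IHq|p IHp q IHq|p IHp q IHq|x p IH|x p IH];
  case=> [x' y'|s' args'|p'|p' q'|p' q'|p' q'|x' p'|x' p'] //=.
- by case=> -> ->.
- case=> /c_inj ss'; subst s'; move=> /eq_in_map eq_args.
  suff -> : args = args' by [].
  by apply: funext => k; have := eq_args k; rewrite mem_enum => /(_ isT) [].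
- by case=> /IH ->.
- by case=> /IHp -> /IHq ->.
- by case=> /IHp -> /IHq ->.
- by case=> /IHp -> /IHq ->.
- by case=> -> /IH ->.
- by case=> -> /IH ->.
Qed.

Lemma formula_enumeration : exists en : nat -> formula ar, forall p, exists k, en k = p.
Proof.
exists (fun k => epsilon (FEq ar 0 0) (fun p => pickle (formula_code p) = k)) => p.
exists (pickle (formula_code p)).
have code_p : exists q, pickle (formula_code q) = pickle (formula_code p) by exists p.
by move: (epsilonP (FEq ar 0 0) code_p) => /(pcan_inj (@pickleK _))/formula_code_inj.
Qed.

End FormulaEnumeration.

(** * Elementary relations between functions *)

Section Elementary.
Variables (Sym : Type) (ar : Sym -> nat) (A : Type).
Variable I : forall s : Sym, ('I_(ar s) -> A) -> Prop.
Local Notation F := (nat -> A).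

Definition same_type (L L' : nat -> F) : Prop :=
  forall p : formula ar,
    eventually (fun i => sat I (pointwise L i) p <-> sat I (pointwise L' i) p).

Definition elementary (Q : F -> F -> Prop) : Prop :=
  forall L L' : nat -> F, (forall v, Q (L v) (L' v)) -> same_type L L'.

Definition enumerable (Q : F -> F -> Prop) : Prop :=
  exists q : nat -> F * F, forall a b, Q a b <-> exists k, q k = (a, b).

Lemma same_type_sym L L' : same_type L L' -> same_type L' L.
Proof. by move=> LL' p; apply: eventually_mono (LL' p) => i ->. Qed.

Lemma elementary_sym Q : elementary Q -> elementary (fun a b => Q b a).
Proof. by move=> HQ L L' /HQ /same_type_sym. Qed.

Lemma elementary_sub (Q Q' : F -> F -> Prop) :
  (forall a b, Q a b -> Q' a b) -> elementary Q' -> elementary Q.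
Proof. by move=> QQ' HQ' L L' LL'; apply: HQ' => v; apply: QQ'. Qed.

Lemma elementary_local Q :
  (forall L L' b, (forall v, Q (L v) (L' v)) ->
     exists2 Q', elementary Q' & forall v, v <= b -> Q' (L v) (L' v)) ->
  elementary Q.
Proof.
move=> local L L' LL' p.
have [Q' HQ' LQ'] := local L L' (var_bound p) LL'.
pose cut (M : nat -> F) v := if v < var_bound p then M v else M (var_bound p).
have cutQ' v : Q' (cut L v) (cut L' v).
  by rewrite /cut; case: ifP => hv; apply: LQ' => //; exact: ltnW.
have cutE M i : sat I (pointwise M i) p <-> sat I (pointwise (cut M) i) p.
  by apply: sat_agree => v hv; rewrite /pointwise /cut hv.
by apply: eventually_mono (HQ' _ _ cutQ' p) => i; rewrite (cutE L) (cutE L').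
Qed.

Lemma elementary_directed_union (J : Type) (Qs : J -> F -> F -> Prop) :
  (forall j j', exists k, forall a b, Qs j a b \/ Qs j' a b -> Qs k a b) ->
  (forall j, elementary (Qs j)) ->
  elementary (fun a b => exists j, Qs j a b).
Proof.
move=> directed HQs; apply: elementary_local => L L' b LL'.
suff [j Hj] : exists j, forall v, v <= b -> Qs j (L v) (L' v) by exists (Qs j).
elim: b => [|b [j Hj]].
  by have [j Hj] := LL' 0; exists j => v; rewrite leqn0 => /eqP ->.
have [j' Hj'] := LL' b.+1; have [k Hk] := directed j j'.
by exists k => v; rewrite leq_eqVlt ltnS => /orP[/eqP ->|/Hj]; auto.
Qed.

Lemma elementary_chain_union (J : Type) (Q0 : F -> F -> Prop)
    (Qs : J -> F -> F -> Prop) :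
  (forall j j', (forall a b, Qs j a b -> Qs j' a b) \/
                (forall a b, Qs j' a b -> Qs j a b)) ->
  (forall j a b, Q0 a b -> Qs j a b) ->
  elementary Q0 -> (forall j, elementary (Qs j)) ->
  elementary (fun a b => Q0 a b \/ exists j, Qs j a b).
Proof.
move=> chain base HQ0 HQs.
pose Qo (o : option J) := if o is Some j then Qs j else Q0.
apply: (elementary_sub (Q' := fun a b => exists o, Qo o a b)).
  by move=> a b [Q0ab|[j Qj]]; [exists None|exists (Some j)].
apply: elementary_directed_union => [[j|] [j'|]|[j|] //=].
- case: (chain j j') => [jj'|j'j].
    by exists (Some j') => a b /= [/jj'|].
  by exists (Some j) => a b /= [|/j'j].
- by exists (Some j) => a b /= [|/base].
- by exists (Some j') => a b /= [/base|].
- by exists None => a b /= [].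
Qed.

Lemma elementary_enumeration Q (q : nat -> F * F) :
  (forall a b, Q a b -> exists k, q k = (a, b)) ->
  same_type (fun k => (q k).1) (fun k => (q k).2) -> elementary Q.
Proof.
move=> cover Hq L L' LL' p.
pose rho v := epsilon 0 (fun k => q k = (L v, L' v)).
have q_rho v : q (rho v) = (L v, L' v) := epsilonP 0 (cover _ _ (LL' v)).
have [p' Hp'] := sat_rename I p rho.
apply: eventually_mono (Hq p') => i.
have -> : pointwise L i = pointwise (fun k => (q k).1) i \o rho.
  by apply: funext => v; rewrite /pointwise /= q_rho.
have -> : pointwise L' i = pointwise (fun k => (q k).2) i \o rho.
  by apply: funext => v; rewrite /pointwise /= q_rho.
by rewrite -!Hp'.
Qed.

Lemma enumerable_columns (L L' : nat -> F) :
  enumerable (fun a b => exists k, a = L k /\ b = L' k).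
Proof.
exists (fun k => (L k, L' k)) => a b.
by split=> -[k]; [move=> [-> ->]|case=> <- <-]; exists k.
Qed.

Lemma elementary_columns (L L' : nat -> F) :
  same_type L L' -> elementary (fun a b => exists k, a = L k /\ b = L' k).
Proof.
apply: (elementary_enumeration (q := fun k => (L k, L' k))).
by move=> a b [k [-> ->]]; exists k.
Qed.

Lemma enumerable_cover Q (q : nat -> F * F) a0 b0 :
  Q a0 b0 -> (forall a b, Q a b -> exists k, q k = (a, b)) -> enumerable Q.
Proof.
move=> Qab0 cover.
exists (fun k => if `[< Q (q k).1 (q k).2 >] then q k else (a0, b0)) => a b.
split=> [/[dup] Qab /cover[k qk]|[k]]; first by exists k; rewrite qk /= asboolT.
by case: asboolP => [+ qk|_ [<- <-]] //; rewrite qk.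
Qed.

Lemma enumerable_sym Q : enumerable Q -> enumerable (fun a b => Q b a).
Proof.
move=> [q qQ]; exists (fun k => ((q k).2, (q k).1)) => a b; rewrite qQ.
by split=> -[k qk]; exists k; rewrite ?qk //; move: qk; case: (q k) => ? ? [-> ->].
Qed.

Lemma enumerable_add Q a b :
  enumerable Q -> enumerable (fun x y => Q x y \/ (x = a /\ y = b)).
Proof.
move=> [q qQ].
apply: (enumerable_cover (q := fun k => if k is k'.+1 then q k' else (a, b))).
  by right.
by move=> x y [/qQ[k qk]|[-> ->]]; [exists k.+1|exists 0].
Qed.

Lemma elementary_almost_eq_iff Q a b a' b' :
  elementary Q -> Q a b -> Q a' b' -> almost_eq a a' <-> almost_eq b b'.
Proof.
move=> HQ Qab Qab'.
pose L v := if v == 0 then a else a'; pose L' v := if v == 0 then b else b'.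
have LL' v : Q (L v) (L' v) by rewrite /L /L'; case: (v == 0).
have := HQ L L' LL' (FEq ar 0 1); rewrite /pointwise /L /L' /= => ev.
by split=> /(eventually_and ev); apply: eventually_mono => i [E] /E.
Qed.

Lemma elementary_almost_eq Q Q' :
  elementary Q -> (forall a b', Q' a b' -> exists2 b, Q a b & almost_eq b b') ->
  elementary Q'.
Proof.
move=> HQ HQ' L L' LL' p.
have /choice[M HM] : forall v, exists b, Q (L v) b /\ almost_eq b (L' v).
  by move=> v; have [b Qb bL'] := HQ' _ _ (LL' v); exists b.
have ML' : eventually (fun i => forall k : 'I_(var_bound p), M k i = L' k i).
  by apply: eventually_forall_ord => k; apply: (HM k).2.
apply: eventually_mono (eventually_and (HQ L M (fun v => (HM v).1) p) ML').
move=> i [-> ML'i]; apply: sat_agree => v hv; exact: ML'i (Ordinal hv).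
Qed.

Lemma eventually_exists (phi : F -> F) (S S' : nat -> A -> Prop) (d : F) :
  (forall h', exists h, phi h = h') ->
  (forall h, eventually (fun i => S i (h i) <-> S' i (phi h i))) ->
  eventually (fun i => (exists a, S i a) <-> (exists a, S' i a)).
Proof.
move=> phi_surj SS'.
pose h i := epsilon (d i) (S i).
have [g phig] := phi_surj (fun i => epsilon (d i) (S' i)).
apply: eventually_mono (eventually_and (SS' h) (SS' g)) => i [Sh Sg].
split=> -[a Sa]; first by exists (phi h i); apply/Sh; apply: epsilonP; exists a.
by exists (g i); apply/Sg; rewrite phig; apply: epsilonP; exists a.
Qed.

Lemma eventually_forall (phi : F -> F) (S S' : nat -> A -> Prop) (d : F) :
  (forall h', exists h, phi h = h') ->
  (forall h, eventually (fun i => S i (h i) <-> S' i (phi h i))) ->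
  eventually (fun i => (forall a, S i a) <-> (forall a, S' i a)).
Proof.
move=> phi_surj SS'.
have nSS' h : eventually (fun i => ~ S i (h i) <-> ~ S' i (phi h i)).
  by apply: eventually_mono (SS' h) => i ->.
have := @eventually_exists phi (fun i a => ~ S i a) (fun i a => ~ S' i a) d.
move=> /(_ phi_surj nSS'); apply: eventually_mono => i E.
split=> Sall a; apply: contrapT => nSa.
  by case: (E.2 (ex_intro _ a nSa)) => b; apply; apply: Sall.
by case: (E.1 (ex_intro _ a nSa)) => b; apply; apply: Sall.
Qed.

Section Graph.
Variable phi : F -> F.
Hypotheses (phi_bij : bijective phi) (phi_eq : almost_preserves phi (@eq_rel A))
  (phi_I : forall s, almost_preserves phi (@I s)).

Lemma same_type_comp (E : nat -> F) : same_type E (phi \o E).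
Proof.
have phi_surj h' : exists h, phi h = h' by case: phi_bij => g _ gK; exists (g h').
move=> p; elim: p E
  => [x y|s args|p IH|p IHp q IHq|p IHp q IHq|p IHp q IHq|x p IH|x p IH] E /=.
- exact: phi_eq (fun k : 'I_2 => if k == ord0 then E x else E y).
- exact: phi_I (fun k => E (args k)).
- by apply: eventually_mono (IH E) => i ->.
- by apply: eventually_mono (eventually_and (IHp E) (IHq E)) => i [-> ->].
- by apply: eventually_mono (eventually_and (IHp E) (IHq E)) => i [-> ->].
- by apply: eventually_mono (eventually_and (IHp E) (IHq E)) => i [-> ->].
- apply: (eventually_exists (E x) phi_surj) => h.
  by apply: eventually_mono (IH (upd E x h)) => i; rewrite comp_upd !pointwise_upd.
- apply: (eventually_forall (E x) phi_surj) => h.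
  by apply: eventually_mono (IH (upd E x h)) => i; rewrite comp_upd !pointwise_upd.
Qed.

Lemma elementary_graph : elementary (fun a b => b = phi a).
Proof.
move=> L L' LL'; suff -> : L' = phi \o L by apply: same_type_comp.
by apply: funext => v; rewrite LL'.
Qed.

End Graph.

Lemma definable_eq : definable I (@eq_rel A).
Proof. by exists (FEq ar 0 1). Qed.

Lemma definable_rel s : definable I (@I s).
Proof. by exists (FRel (fun k : 'I_(ar s) => nat_of_ord k)). Qed.

Lemma almost_preserves_definable (phi : F -> F) n (P : ('I_n -> A) -> Prop) :
  elementary (fun a b => b = phi a) -> definable I P -> almost_preserves phi P.
Proof.
move=> phi_elem [S HS] f; case: n P f HS => [|n] P f HS.
  exists 0 => i _; suff -> : (fun k : 'I_0 => phi (f k) i) = (fun k => f k i) by [].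
  by apply: funext => -[].
pose E v := f (inord v).
apply: eventually_mono (phi_elem E (phi \o E) (fun v => erefl) S) => i.
have -> : (fun k => f k i) = (fun k : 'I_n.+1 => pointwise E i k).
  by apply: funext => k; rewrite /pointwise /E inord_val.
have -> : (fun k => phi (f k) i) = (fun k : 'I_n.+1 => pointwise (phi \o E) i k).
  by apply: funext => k; rewrite /pointwise /E /= inord_val.
by rewrite !HS.
Qed.

End Elementary.

(** * Extending elementary relations *)

Section Realization.
Variables (Sym : Type) (ar : Sym -> nat) (A : Type).
Variable I : forall s : Sym, ('I_(ar s) -> A) -> Prop.
Variable en : nat -> formula ar.
Hypothesis en_surj : forall p, exists k, en k = p.
Local Notation F := (nat -> A).
Local Notation same_type := (same_type I).
Local Notation elementary := (elementary I).

Definition literal (s : nat -> bool) j : formula ar :=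
  if s j then en j else FNot (en j).

Fixpoint type_upto (s : nat -> bool) (m : nat) : formula ar :=
  match m with
  | 0 => literal s 0
  | m'.+1 => FAnd (type_upto s m') (literal s m)
  end.

Lemma sat_type_upto s m e :
  sat I e (type_upto s m) <-> forall j, j <= m -> (sat I e (en j) <-> s j).
Proof.
have sat_literal j : sat I e (literal s j) <-> (sat I e (en j) <-> s j).
  by rewrite /literal; case: (s j) => /=; split=> // H; [apply/H|move/H].
elim: m => [|m IH] /=.
  by rewrite sat_literal; split=> [H j|/(_ 0 (leqnn 0))//]; rewrite leqn0 => /eqP->.
rewrite IH sat_literal; split=> [[H Hm] j|H].
  by rewrite leq_eqVlt ltnS => /orP[/eqP->|/H].
by split=> [j hj|]; apply: H; rewrite // ltnW.
Qed.

Lemma type_upto_ext s s' m :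
  (forall j, j <= m -> s j = s' j) -> type_upto s m = type_upto s' m.
Proof.
elim: m => [|m IH] ss' /=; first by rewrite /literal ss'.
by rewrite IH /literal ?ss' // => j hj; apply/ss'/ltnW.
Qed.

(* [tp i] is the type of [h i] over the parameters [L _ i]; the new partner
   [h' i] realizes the longest prefix of it, of length at most [i], that is
   realizable over [L' _ i]. *)
Section Forth.
Variables (L L' : nat -> F) (h : F).
Hypothesis LL' : same_type L L'.

Let tp i j := `[< sat I (upd (pointwise L i) 0 (h i)) (en j) >].
Let realizes i x m := sat I (upd (pointwise L' i) 0 x) (type_upto (tp i) m).

Lemma eventually_realizable m : eventually (fun i => exists x, realizes i x m).
Proof.
pose G s i := (exists x, sat I (upd (pointwise L i) 0 x) (type_upto s m)) ->
  exists x, sat I (upd (pointwise L' i) 0 x) (type_upto s m).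
have uniform : eventually (fun i => forall s, G s i).
  apply: (@eventually_forall_bits G m.+1) => [s s' ss'|s].
    by rewrite /G (type_upto_ext ss').
  by apply: eventually_mono (LL' (FExists 0 (type_upto s m))) => i [].
apply: eventually_mono uniform => i /(_ (tp i)); apply; exists (h i).
by apply/sat_type_upto => j _; rewrite /tp asboolE.
Qed.

Lemma exists_best_realizer i :
  exists x, forall m, m <= i -> (exists y, realizes i y m) -> realizes i x m.
Proof.
case: (bounded_max_or_none (fun m => exists y, realizes i y m) i)
  => [none|[mx [_ [x Hx]] maxmx]].
  by exists (h i) => m hm /(none m hm).
exists x => m hm /(maxmx m hm) mmx.
move: Hx; rewrite /realizes !sat_type_upto => Hx j hj.
by apply: Hx; apply: leq_trans hj mmx.
Qed.

Lemma same_type_extend : exists h', same_type (upd L 0 h) (upd L' 0 h').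
Proof.
pose h' i := epsilon (h i)
  (fun x => forall m, m <= i -> (exists y, realizes i y m) -> realizes i x m).
have h'P i m : m <= i -> (exists y, realizes i y m) -> realizes i (h' i) m.
  exact: (epsilonP (h i) (exists_best_realizer i)).
exists h' => p; have [j <-] := en_surj p.
apply: eventually_mono (eventually_and (eventually_ge j) (eventually_realizable j)).
move=> i [ji /(h'P i j ji)]; rewrite /realizes !pointwise_upd.
by move=> /sat_type_upto /(_ j (leqnn j)) ->; rewrite /tp asboolE.
Qed.

End Forth.

Lemma elementary_extend Q :
  enumerable Q -> elementary Q ->
  forall h, exists h', elementary (fun a b => Q a b \/ (a = h /\ b = h')).
Proof.
move=> [q qQ] HQ h.
(* Variable 0 is a dummy slot, overwritten by the new element. *)
pose L v := (q v.-1).1; pose L' v := (q v.-1).2.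
have LL' : same_type L L'.
  by apply: HQ => v; apply/qQ; exists v.-1; apply: surjective_pairing.
have [h' Hh'] := same_type_extend h LL'.
exists h'; apply: (elementary_enumeration (q := fun v => (upd L 0 h v, upd L' 0 h' v))).
  by move=> a b [/qQ[k qk]|[-> ->]]; [exists k.+1; rewrite /upd /L /L' qk|exists 0].
exact: Hh'.
Qed.

Lemma elementary_extend_left Q :
  enumerable Q -> elementary Q ->
  forall h', exists h, elementary (fun a b => Q a b \/ (a = h /\ b = h')).
Proof.
move=> /enumerable_sym EQ /elementary_sym HQ h'.
have [h Hh] := elementary_extend EQ HQ h'.
by exists h; apply: elementary_sub (elementary_sym Hh) => a b [Qab|[-> ->]]; auto.
Qed.

Section Separation.
Variables (n : nat) (R : ('I_n -> A) -> Prop).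
Hypothesis R_undef : ~ definable I R.

Fixpoint realized_types (m : nat) (Real : (nat -> bool) -> Prop) (k : nat)
    (s : nat -> bool) : formula ar :=
  match k with
  | 0 => if `[< Real s >] then type_upto s m else FNot (FEq ar 0 0)
  | k'.+1 => FOr (realized_types m Real k' (set_bit s k' true))
                 (realized_types m Real k' (set_bit s k' false))
  end.

Lemma sat_realized_types m Real k s e :
  sat I e (realized_types m Real k s) <->
  exists s', [/\ forall j, k <= j -> s' j = s j, Real s' & sat I e (type_upto s' m)].
Proof.
elim: k s => [|k IH] s /=.
  split=> [|[s' [s's Rs' Hs']]]; first by case: asboolP => Rs Hs; [exists s|case: Hs].
  have -> : s = s' by apply: funext => j; rewrite s's.
  by rewrite asboolT.
rewrite !IH; split=> [|[s' [s's Rs' Hs']]].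
  move=> [] [s' [s's Rs' Hs']]; exists s'; split=> // j hj;
    by rewrite s's ?(ltnW hj) // /set_bit (gtn_eqF hj).
have s'E j : k <= j -> s' j = set_bit s k (s' k) j.
  rewrite /set_bit leq_eqVlt => /orP[/eqP->|hj]; first by rewrite eqxx.
  by rewrite (gtn_eqF hj) s's.
by case: (s' k) s'E => s'E; [left|right]; exists s'.
Qed.

Lemma separating_pair m : exists e1 e2 : nat -> A,
  [/\ R (fun k => e1 k), ~ R (fun k => e2 k) &
      forall j, j <= m -> (sat I e1 (en j) <-> sat I e2 (en j))].
Proof.
(* Otherwise [R] is defined by the disjunction of the [m]-types of R-tuples. *)
apply: contrapT => no_pair; apply: R_undef.
pose pat (e : nat -> A) j := `[< sat I e (en j) >].
pose Real s :=
  exists2 e : nat -> A, R (fun k => e k) & forall j, j <= m -> pat e j = s j.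
exists (realized_types m Real m.+1 (fun _ => false)) => e.
rewrite sat_realized_types; split=> [Re|[s' [_ [e1 Re1 e1s'] Hs']]].
  exists (fun j => (j <= m) && pat e j); split=> [j hj||].
  - by rewrite leqNgt hj.
  - by exists e => // j ->.
  - by apply/sat_type_upto => j -> /=; rewrite /pat asboolE.
apply: contrapT => nRe; apply: no_pair; exists e1, e; split=> // j hj.
move/sat_type_upto: Hs' => /(_ j hj) ->.
by rewrite -e1s' // /pat asboolE.
Qed.

Lemma separating_columns : exists L L' : nat -> F,
  [/\ forall i, R (fun k => L k i), forall i, ~ R (fun k => L' k i) & same_type L L'].
Proof.
have /choice[e1 /choice[e2 He]] := separating_pair.
exists (fun k i => e1 i k), (fun k i => e2 i k); split.
- by move=> i; case: (He i).
- by move=> i; case: (He i).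
- move=> p; have [j <-] := en_surj p.
  by exists j => i ji; case: (He i) => _ _ /(_ j ji).
Qed.

End Separation.

End Realization.

(** * Well-orders with countable initial segments *)

Definition countable_pred (X : Type) (P : X -> Prop) : Prop :=
  exists q : nat -> X, forall y, P y -> exists k, q k = y.

Definition omega1_order (X : Type) (lt : X -> X -> Prop) : Prop :=
  [/\ well_founded lt, forall x y, x <> y -> lt x y \/ lt y x,
      forall x y z, lt x y -> lt y z -> lt x z &
      forall x, countable_pred (fun y => lt y x)].

Lemma omega1_order_pullback (T X : Type) (lt : X -> X -> Prop) (iota : T -> X) :
  injective iota -> well_founded lt -> (forall x y, x <> y -> lt x y \/ lt y x) ->
  (forall x y z, lt x y -> lt y z -> lt x z) ->
  (forall a, countable_pred (fun y => lt y (iota a))) ->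
  omega1_order (fun a b => lt (iota a) (iota b)).
Proof.
move=> iota_inj wf tot tr cnt; split.
- exact: wf_inverse_image.
- by move=> a b ab; apply: tot => /iota_inj.
- by move=> a b c; apply: tr.
- move=> b; have [q Hq] := cnt b.
  exists (fun k => epsilon b (fun a => iota a = q k)) => a /Hq[k qk]; exists k.
  rewrite qk; apply: iota_inj.
  exact: (epsilonP b (ex_intro (fun a' => iota a' = iota a) a erefl)).
Qed.

Section WellOrder.
Variables (X : eqType) (W : rel X).
Hypothesis W_wo : well_order W.

Lemma well_order_min (P : X -> Prop) :
  (exists x, P x) -> exists2 z, P z & forall x, P x -> W z x.
Proof.
move=> [x Px].
have [|z [[Pz lbz] _]] := @W_wo [pred y | `[< P y >]].
  by exists x; rewrite inE; apply/asboolP.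
exists z => [|y Py]; first by move: Pz; rewrite inE => /asboolP.
by apply: lbz; rewrite inE; apply/asboolP.
Qed.

Let W_chain : wo_chain W predT := fun B _ => @W_wo B.

Lemma well_order_antisym x y : W x y -> W y x -> x = y.
Proof.
by move=> Wxy Wyx; apply: (wo_chain_antisymmetric W_chain) => //; rewrite Wxy Wyx.
Qed.

Lemma well_order_total x y : W x y || W y x.
Proof. exact: (wo_chainW W_chain). Qed.

Lemma well_order_trans x y z : W x y -> W y z -> W x z.
Proof.
move=> Wxy Wyz.
have [m Hm minm] :=
  well_order_min (ex_intro (fun t => t = x \/ t = y \/ t = z) x (or_introl erefl)).
case: Hm => [|[|]] ->{m} in minm *; first by apply: minm; auto.
- by rewrite (well_order_antisym Wxy (minm x (or_introl erefl))).
- by rewrite -(well_order_antisym Wyz (minm y (or_intror (or_introl erefl)))).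
Qed.

End WellOrder.

(* If some initial segment of a well-order of the Cantor space is uncountable,
   CH embeds the whole space into the least such segment. *)
Lemma cantor_omega1_order :
  CH -> exists lt : (nat -> bool) -> (nat -> bool) -> Prop, omega1_order lt.
Proof.
move=> hCH; have [W W_wo] := well_ordering_principle (nat -> bool).
pose ltW x y := W x y /\ x <> y.
have wf : well_founded ltW.
  move=> x; apply: contrapT => nAx.
  have [z nAz minz] := well_order_min W_wo (ex_intro (fun t => ~ Acc ltW t) x nAx).
  apply: nAz; constructor => y [Wyz yz]; apply: contrapT => nAy.
  by apply: yz; apply: (well_order_antisym W_wo Wyz); apply: minz.
have tot x y : x <> y -> ltW x y \/ ltW y x.
  move=> xy; case/orP: (well_order_total W_wo x y) => ?; [left|right]; split=> //.
  by move=> yx; apply: xy.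
have tr x y z : ltW x y -> ltW y z -> ltW x z.
  move=> [Wxy xy] [Wyz yz]; split; first exact: (well_order_trans W_wo Wxy Wyz).
  by move=> xz; subst z; apply: xy; exact: (well_order_antisym W_wo Wxy Wyz).
case: (lem (forall x, countable_pred (fun y => ltW y x))) => [cnt|/existsNP[x nx]].
  by exists ltW; split.
have [x0 nx0 minx0] := well_order_min W_wo
  (ex_intro (fun t => ~ countable_pred (fun y => ltW y t)) x nx).
case: (hCH (fun y => ltW y x0)) => [[g Hg]|[h [hS h_inj]]].
  by case: nx0; exists g.
exists (fun a b => ltW (h a) (h b)).
apply: omega1_order_pullback h_inj wf tot tr _ => a.
apply: contrapT => na; have [Wha hax0] := hS a.
by apply: hax0; apply: (well_order_antisym W_wo Wha); apply: minx0.
Qed.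

Lemma function_omega1_order (A : Type) :
  CH -> countable_type A ->
  exists lt : (nat -> A) -> (nat -> A) -> Prop, omega1_order lt.
Proof.
move=> hCH [c c_inj]; have [lt [wf tot tr cnt]] := cantor_omega1_order hCH.
pose graph (g : nat -> A) k :=
  if @unpickle (nat * nat)%type k is Some (i, j) then c (g i) == j else false.
have graph_inj : injective graph.
  move=> g g' gg'; apply: funext => i.
  have := congr1 (fun f => f (pickle (i, c (g i)))) gg'; rewrite /graph pickleK eqxx.
  by move/esym/eqP/c_inj.
exists (fun a b => lt (graph a) (graph b)).
by apply: omega1_order_pullback graph_inj wf tot tr _ => a; apply: cnt.
Qed.

(** * Back and forth *)

Section BackAndForth.
Variables (Sym : Type) (ar : Sym -> nat) (A : Type).
Variable I : forall s : Sym, ('I_(ar s) -> A) -> Prop.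
Variable en : nat -> formula ar.
Hypothesis en_surj : forall p, exists k, en k = p.
Local Notation F := (nat -> A).
Local Notation elementary := (elementary I).

Variable lt : F -> F -> Prop.
Hypotheses (lt_wf : well_founded lt) (lt_total : forall x y, x <> y -> lt x y \/ lt y x)
  (lt_trans : forall x y z, lt x y -> lt y z -> lt x z)
  (lt_countable : forall x, countable_pred (fun y => lt y x)).
Variable Q0 : F -> F -> Prop.
Hypotheses (Q0_enum : enumerable Q0) (Q0_elem : elementary Q0).

Definition pairs_below x (rec : forall y, lt y x -> F * F) (a b : F) : Prop :=
  Q0 a b \/ exists y (ltyx : lt y x),
    (a = y /\ b = (rec y ltyx).1) \/ (a = (rec y ltyx).2 /\ b = y).

(* Stage [x] first chooses a partner of [x] on the right, then one on the left. *)
Definition back_and_forth_step x (rec : forall y, lt y x -> F * F) : F * F :=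
  let fw := epsilon x (fun h' =>
    elementary (fun a b => pairs_below rec a b \/ (a = x /\ b = h'))) in
  (fw, epsilon x (fun h => elementary (fun a b =>
    (pairs_below rec a b \/ (a = x /\ b = fw)) \/ (a = h /\ b = x)))).

Definition back_and_forth : F -> F * F :=
  Fix lt_wf (fun _ => (F * F)%type) back_and_forth_step.
Definition forth x := (back_and_forth x).1.
Definition back x := (back_and_forth x).2.

Definition matched_below x (a b : F) : Prop :=
  Q0 a b \/ exists y, lt y x /\ ((a = y /\ b = forth y) \/ (a = back y /\ b = y)).

Definition matched_upto x (a b : F) : Prop :=
  matched_below x a b \/ (a = x /\ b = forth x) \/ (a = back x /\ b = x).

Lemma back_and_forth_eq x :
  back_and_forth x = back_and_forth_step (fun y (_ : lt y x) => back_and_forth y).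
Proof.
rewrite /back_and_forth Fix_eq // => z f g fg.
suff -> : f = g by [].
by apply: functional_extensionality_dep => y; apply: functional_extensionality_dep.
Qed.

Lemma pairs_below_matched x :
  pairs_below (fun y (_ : lt y x) => back_and_forth y) = matched_below x.
Proof.
apply: funext => a; apply: funext => b; apply: propext.
by split=> -[Q0ab|[y [ltyx Hy]]]; [left|right; exists y|left|right; exists y, ltyx].
Qed.

Lemma forth_eq x :
  forth x = epsilon x (fun h' =>
    elementary (fun a b => matched_below x a b \/ (a = x /\ b = h'))).
Proof. by rewrite /forth back_and_forth_eq /= pairs_below_matched. Qed.

Lemma back_eq x :
  back x = epsilon x (fun h =>
    elementary (fun a b =>
      (matched_below x a b \/ (a = x /\ b = forth x)) \/ (a = h /\ b = x))).
Proof. by rewrite /back back_and_forth_eq /= pairs_below_matched -forth_eq. Qed.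

Lemma matched_upto_mono y y' a b : lt y y' -> matched_upto y a b -> matched_upto y' a b.
Proof.
move=> lty [[Q0ab|[z [ltz Hz]]]|Hy]; left; [by left|right|right].
  by exists z; split=> //; apply: lt_trans lty.
by exists y.
Qed.

Lemma matched_upto_chain y y' :
  (forall a b, matched_upto y a b -> matched_upto y' a b) \/
  (forall a b, matched_upto y' a b -> matched_upto y a b).
Proof.
case: (lem (y = y')) => [<-|yy']; first by left.
by case: (lt_total yy') => lty; [left|right] => a b; apply: matched_upto_mono.
Qed.

Lemma enumerable_matched_below x : enumerable (matched_below x).
Proof.
have [r Hr] := lt_countable x; have [q0 q0Q] := Q0_enum.
have Q0q : Q0 (q0 0).1 (q0 0).2 by apply/q0Q; exists 0; apply: surjective_pairing.
pose cand j t :=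
  match t with 0 => q0 j | 1 => (r j, forth (r j)) | _ => (back (r j), r j) end.
apply: (enumerable_cover (Q := matched_below x)
  (q := fun k => if @unpickle (nat * nat)%type k is Some (j, t) then cand j t else q0 0)
  (or_introl Q0q)).
move=> a b [/q0Q[j qj]|[y [ltyx [[-> ->]|[-> ->]]]]].
- by exists (pickle (j, 0)); rewrite pickleK.
- by have [j <-] := Hr y ltyx; exists (pickle (j, 1)); rewrite pickleK.
- by have [j <-] := Hr y ltyx; exists (pickle (j, 2)); rewrite pickleK.
Qed.

Lemma elementary_matched_upto x : elementary (matched_upto x).
Proof.
elim/(well_founded_ind lt_wf): x => x IH.
have below : elementary (matched_below x).
  have chain (j j' : {y | lt y x}) := matched_upto_chain (sval j) (sval j').
  have base (j : {y | lt y x}) a b : Q0 a b -> matched_upto (sval j) a b by left; left.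
  have := elementary_chain_union chain base Q0_elem (fun j => IH _ (svalP j)).
  apply: elementary_sub => a b [Q0ab|[y [ltyx Hy]]]; first by left.
  by right; exists (exist _ y ltyx); right.
have forth_x : elementary (fun a b => matched_below x a b \/ (a = x /\ b = forth x)).
  have := epsilonP x (elementary_extend en_surj (enumerable_matched_below x) below x).
  by rewrite -forth_eq.
have back_x : elementary (fun a b =>
    (matched_below x a b \/ (a = x /\ b = forth x)) \/ (a = back x /\ b = x)).
  have := epsilonP x (elementary_extend_left en_surj
    (enumerable_add x (forth x) (enumerable_matched_below x)) forth_x x).
  by rewrite -back_eq.
by apply: elementary_sub back_x => a b [|[|]]; auto.
Qed.

Lemma elementary_back_and_forth :
  elementary (fun a b => Q0 a b \/ b = forth a \/ a = back b).
Proof.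
have base y a b : Q0 a b -> matched_upto y a b by left; left.
have := elementary_chain_union matched_upto_chain base Q0_elem elementary_matched_upto.
apply: elementary_sub => a b [Q0ab|[->|->]]; first by left.
  by right; exists a; right; left.
by right; exists b; right; right.
Qed.

End BackAndForth.

(** * The permutation *)

Lemma not_almost_preserves (A : Type) (phi : (nat -> A) -> nat -> A) n
    (R : ('I_n -> A) -> Prop) (L L' : nat -> nat -> A) :
  (forall i, R (fun k => L k i)) -> (forall i, ~ R (fun k => L' k i)) ->
  (forall k, almost_eq (phi (L k)) (L' k)) -> ~ almost_preserves phi R.
Proof.
move=> RL nRL phiL /(_ (fun k : 'I_n => L k)) pres.
have [N HN] := eventually_and pres (eventually_forall_ord (fun k : 'I_n => phiL k)).
case: (HN N (leqnn N)) => [[/(_ (RL N)) RphiL _] phiL'].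
apply: (nRL N); suff <- : (fun k : 'I_n => phi (L k) N) = (fun k => L' k N) by [].
by apply: funext => k; apply: phiL'.
Qed.

Section AlmostBijection.
Variable A : Type.
Local Notation F := (nat -> A).

Definition class_rep (g : F) : F := epsilon g (fun h => almost_eq h g).

Lemma almost_eq_class_rep g : almost_eq g (class_rep g).
Proof.
apply: almost_eq_sym.
exact: (epsilonP g (ex_intro (fun h => almost_eq h g) g (almost_eq_refl g))).
Qed.

Lemma class_rep_eq g g' : almost_eq g g' -> class_rep g = class_rep g'.
Proof.
move=> gg'; rewrite /class_rep.
have -> : (fun h => almost_eq h g) = (fun h => almost_eq h g').
  apply: funext => h; apply: propext.
  split=> hg; first exact: almost_eq_trans hg gg'.
  exact: almost_eq_trans hg (almost_eq_sym gg').
by apply: epsilon_default; exists g'; apply: almost_eq_refl.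
Qed.

Definition swap_value (x y z : A) : A :=
  if `[< z = x >] then y else if `[< z = y >] then x else z.

Lemma swap_valueK x y : involutive (swap_value x y).
Proof.
move=> z; rewrite /swap_value; case: (asboolP (z = x)) => [->|zx].
  by case: (asboolP (y = x)) => [->//|_]; rewrite asboolT.
case: (asboolP (z = y)) => [->|zy]; first by rewrite asboolT.
by rewrite !asboolF.
Qed.

Definition swap (g g' h : F) : F := fun i => swap_value (g i) (g' i) (h i).

Lemma swapK g g' : involutive (swap g g').
Proof. by move=> h; apply: funext => i; rewrite /swap swap_valueK. Qed.

Lemma swap_almost_eq_l g g' h : almost_eq h g -> almost_eq (swap g g' h) g'.
Proof. by apply: eventually_mono => i hg; rewrite /swap /swap_value hg asboolT. Qed.

Lemma swap_almost_eq_r g g' h : almost_eq h g' -> almost_eq (swap g g' h) g.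
Proof.
apply: eventually_mono => i hg'; rewrite /swap /swap_value hg'.
by case: (asboolP (g' i = g i)) => // _; rewrite asboolT.
Qed.

(* On the class of [k] the map [phi] is the involution swapping that class with
   the class of [f k], so [phi] is a bijection as soon as [f] is one on classes. *)
Lemma almost_bijection (f : F -> F) :
  (forall x y, almost_eq (f x) (f y) <-> almost_eq x y) ->
  (forall m, exists k, almost_eq (f k) m) ->
  exists phi : F -> F, bijective phi /\ forall k, almost_eq (phi k) (f k).
Proof.
move=> f_inj f_surj.
pose phi k := swap (class_rep k) (f (class_rep k)) k.
have phi_rep k : almost_eq (phi k) (f (class_rep k)).
  exact: swap_almost_eq_l (almost_eq_class_rep k).
have phi_inj : injective phi.
  move=> k k' E.
  have /f_inj rr' : almost_eq (f (class_rep k)) (f (class_rep k')).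
    by apply: almost_eq_trans (almost_eq_sym (phi_rep k)) _; rewrite E.
  have kk' : almost_eq k k'.
    apply: almost_eq_trans (almost_eq_class_rep k) _.
    exact: almost_eq_trans rr' (almost_eq_sym (almost_eq_class_rep k')).
  have := congr1 (swap (class_rep k) (f (class_rep k))) E.
  by rewrite {1}/phi swapK /phi (class_rep_eq kk') swapK.
have phi_surj m : exists k, phi k = m.
  have [k fk] := f_surj m; pose r := class_rep k.
  have fr : almost_eq (f r) m.
    apply: almost_eq_trans fk; apply/f_inj.
    exact: almost_eq_sym (almost_eq_class_rep k).
  have rep_r : class_rep (swap r (f r) m) = r.
    apply: class_rep_eq.
    apply: almost_eq_trans (swap_almost_eq_r _ (almost_eq_sym fr)) _.
    exact: almost_eq_sym (almost_eq_class_rep k).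
  by exists (swap r (f r) m); rewrite /phi rep_r swapK.
exists phi; split=> [|k].
  exists (fun m => epsilon m (fun k => phi k = m)) => [k|m].
    apply: phi_inj.
    exact: (epsilonP (phi k) (ex_intro (fun k' => phi k' = phi k) k erefl)).
  exact: (epsilonP m (phi_surj m)).
apply: almost_eq_trans (phi_rep k) _; apply/f_inj.
exact: almost_eq_sym (almost_eq_class_rep k).
Qed.

End AlmostBijection.

Lemma elementary_permutation (Sym : Type) (ar : Sym -> nat) (A : Type)
    (I : forall s : Sym, ('I_(ar s) -> A) -> Prop)
    (Q : (nat -> A) -> (nat -> A) -> Prop) (fw bw : (nat -> A) -> nat -> A) :
  elementary I Q -> (forall a, Q a (fw a)) -> (forall b, Q (bw b) b) ->
  exists phi : (nat -> A) -> nat -> A,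
    [/\ bijective phi, elementary I (fun a b => b = phi a) &
        forall a b, Q a b -> almost_eq (phi a) b].
Proof.
move=> HQ Qfw Qbw.
have [phi [phi_bij phi_fw]] := @almost_bijection _ fw
  (fun x y => iff_sym (elementary_almost_eq_iff HQ (Qfw x) (Qfw y)))
  (fun m => ex_intro _ (bw m)
     ((elementary_almost_eq_iff HQ (Qfw (bw m)) (Qbw m)).1 (almost_eq_refl _))).
have phiQ a b : Q a b -> almost_eq (phi a) b.
  move=> Qab; apply: almost_eq_trans (phi_fw a) _.
  exact: (elementary_almost_eq_iff HQ (Qfw a) Qab).1 (almost_eq_refl a).
exists phi; split=> //.
apply: (elementary_almost_eq HQ) => a _ /= ->.
by exists (fw a); [|apply: almost_eq_sym].
Qed.

Lemma undefinable_not_almost_preserved (hCH : CH)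
    (Sym : Type) (ar : Sym -> nat) (A : Type)
    (hSym : countable_type Sym) (hA : countable_type A)
    (I : forall s : Sym, ('I_(ar s) -> A) -> Prop)
    (n : nat) (R : ('I_n -> A) -> Prop) :
  ~ definable I R ->
  exists phi : (nat -> A) -> nat -> A,
    [/\ bijective phi, almost_preserves phi (@eq_rel A),
        forall s, almost_preserves phi (I s) & ~ almost_preserves phi R].
Proof.
move=> R_undef; have [c c_inj] := hSym.
have [en en_surj] := formula_enumeration ar c_inj.
have [L [L' [RL nRL LL']]] := separating_columns en_surj R_undef.
have [lt [lt_wf lt_total lt_trans lt_countable]] := function_omega1_order hCH hA.
have T := elementary_back_and_forth en_surj (lt_wf := lt_wf) lt_total lt_trans
  lt_countable (enumerable_columns L L') (elementary_columns LL').
have [phi [phi_bij phi_elem phiQ]] := elementary_permutation T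
  (fun a => or_intror (or_introl erefl)) (fun b => or_intror (or_intror erefl)).
exists phi; split=> //.
- exact: almost_preserves_definable phi_elem (definable_eq I).
- by move=> s; apply: almost_preserves_definable phi_elem (definable_rel I s).
- by apply: (not_almost_preserves RL nRL) => k; apply: phiQ; left; exists k.
Qed.
Theorem theorem1 (hCH : CH)
    (Sym : Type) (ar : Sym -> nat) (A : Type)
    (hSym : countable_type Sym) (hA : countable_type A)
    (I : forall s : Sym, ('I_(ar s) -> A) -> Prop)
    (n : nat) (R : ('I_n -> A) -> Prop) :
  definable I R <->
  (forall phi : (nat -> A) -> (nat -> A),
      bijective phi ->
      almost_preserves phi (@eq_rel A) ->
      (forall s : Sym, almost_preserves phi (I s)) ->
      almost_preserves phi R).
Proof.
split=> [R_def phi phi_bij phi_eq phi_I|pres].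
  exact: almost_preserves_definable (elementary_graph phi_bij phi_eq phi_I) R_def.
apply: contrapT => R_undef.
have [phi [phi_bij phi_eq phi_I not_pres]] :=
  undefinable_not_almost_preserved hCH hSym hA R_undef.
exact: not_pres (pres phi phi_bij phi_eq phi_I).
Qed.
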